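(* Let $k\geq 2$ and $n\geq k+1$ be integers. Then in $\mathcal{H}$, $$ \sum_{\substack{r, s_i\geq 1,\ s_1\geq 2\\ r+s_1+\cdots +s_{k-1}=n}} z_{r}\,\tilde{\sqcup}\, z_{s_1,\dots, s_{k-1}} = \sum_{\substack{t_i\geq 1\\ t_1+\cdots+t_{k}=n }} \big[ C(t_1,\dots, t_{k-1})- C(t_2,\dots, t_{k-1})\big] z_{t_1,\dots, t_{k}} - \sum_{ \substack{ t_i\geq 1,\ t_2=1 \\ t_1+\cdots+t_{k}=n }} z_{t_1,\dots, t_{k}}, $$ with the convention $C(t_2,\dots,t_{k-1})=C(\emptyset)=1$ when $k=2$.
   Context: Let $\mathcal{H}$ be the free $\mathbb{Z}$-module on words in letters $z_s$ ($s\geq1$), with $z_{s_1,\dots,s_k}:=z_{s_1}\cdots z_{s_k}$ and $1$ the empty word. Let $\mathbb{Z}\langle x_0,x_1\rangle$ be the free $\mathbb{Z}$-module on words in two letters $x_0,x_1$, with the shuffle product $\sqcup$ defined bilinearly and recursively by $1\sqcup u=u\sqcup 1=u$ and $(au)\sqcup(bv)=a(u\sqcup (bv))+b((au)\sqcup v)$ for letters $a,b\in\{x_0,x_1\}$ and words $u,v$. Let $\rho$ be the $\mathbb{Z}$-linear bijection from $\mathbb{Z}\oplus \mathbb{Z}\langle x_0,x_1\rangle x_1$ (span of $1$ and words ending in $x_1$) onto $\mathcal{H}$ given by $\rho(1)=1$ and $\rho(x_0^{s_1-1}x_1\cdots x_0^{s_k-1}x_1)=z_{s_1,\dots,s_k}$.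 Define the product $\tilde{\sqcup}$ on $\mathcal{H}$ by $w_1\,\tilde{\sqcup}\,w_2=\rho\big(\rho^{-1}(w_1)\sqcup\rho^{-1}(w_2)\big)$. For $m\geq 1$ and positive integers $t_1,\dots,t_{m}$ with $T_j=t_1+\cdots+t_j$, set $C(t_1,\dots,t_{m})=\sum_{j=1}^{m}2^{T_j-j}+2^{T_{m}-m}$; also $C(\emptyset)=1$. In particular $C(t_2,\dots,t_{k-1})$ denotes this quantity applied to the tuple $(t_2,\dots,t_{k-1})$. *)

From mathcomp Require Import all_boot all_order all_algebra.
Set Implicit Arguments. Unset Strict Implicit. Unset Printing Implicit Defensive.
Import GRing.Theory Num.Theory.
Local Open Scope ring_scope.

(* Words in x0, x1: x0 = false, x1 = true. *)
Fixpoint shuffle (u : seq bool) : seq bool -> seq (seq bool) :=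
  match u with
  | [::] => fun v => [:: v]
  | a :: u' => fix sh (v : seq bool) :=
      match v with
      | [::] => [:: u]
      | b :: v' => map (cons a) (shuffle u' v) ++ map (cons b) (sh v')
      end
  end.

(* rho^{-1}: z_{s1..sk} |-> x0^{s1-1} x1 ... x0^{sk-1} x1 *)
Definition rhoinv (s : seq nat) : seq bool :=
  flatten [seq rcons (nseq i.-1 false) true | i <- s].

(* rho on words ending in x1 (and the empty word): counts block lengths *)
Fixpoint rho_aux (c : nat) (w : seq bool) : seq nat :=
  match w with
  | [::] => [::]
  | false :: w' => rho_aux c.+1 w'
  | true :: w' => c.+1 :: rho_aux 0 w'
  end.
Definition rho (w : seq bool) : seq nat := rho_aux 0 w.

(* Elements of H: finite formal Z-linear combinations of words z_s,
   given as lists of (coefficient, word). *)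
Definition hsum := seq (int * seq nat).
Definition hcoef (x : hsum) (w : seq nat) : int :=
  \sum_(p <- x) (if p.2 == w then p.1 else 0).
Definition heq (x y : hsum) : Prop := forall w, hcoef x w = hcoef y w.
Definition zw (t : seq nat) : hsum := [:: (1, t)].
Definition hscale (c : int) (x : hsum) : hsum := [seq (c * p.1, p.2) | p <- x].
Definition hopp (x : hsum) : hsum := hscale (-1) x.
Definition hadd (x y : hsum) : hsum := x ++ y.
Definition hbig (A : Type) (I : seq A) (f : A -> hsum) : hsum := flatten (map f I).

(* the product  w1 ~⧢ w2 = rho (rho^{-1} w1 ⧢ rho^{-1} w2), bilinearly *)
Definition hsh (x y : hsum) : hsum :=
  flatten [seq [seq (p.1 * q.1, rho w) | w <- shuffle (rhoinv p.2) (rhoinv q.2)]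
          | p <- x, q <- y].

Fixpoint comps (k n : nat) : seq (seq nat) :=
  match k with
  | 0 => if n == 0%N then [:: [::]] else [::]
  | k'.+1 => flatten [seq [seq i :: c | c <- comps k' (n - i)] | i <- iota 1 n]
  end.

Definition Cf (t : seq nat) : int :=
  if t is [::] then 1 else
  ((\sum_(1 <= j < (size t).+1) 2 ^ (sumn (take j t) - j)
     + 2 ^ (sumn t - size t))%N)%:Z.

From mathcomp Require Import all_boot all_order all_algebra zify.
Set Implicit Arguments. Unset Strict Implicit. Unset Printing Implicit Defensive.
Import GRing.Theory.

(* Let W = rho^{-1}(w) for a composition w = (t_1, ..., t_k) of n. The coefficient of z_w on the
   left counts the ways to split the letters of W into two complementary subwords, the first of
   the form x0^{r-1} x1 and the second admissible (x0 ... x1).  Reading W from the left, such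
   counts obey linear recurrences obtained by differentiating the two word languages; a block
   x0^j multiplies by 2^j the number of splittings whose second part ends in x1.  Writing E(t)
   for the number of splittings of rho^{-1}(t) whose second part is empty or ends in x1, this
   gives E(r, t) = 2^{r-1} (1 + E(t)), the recurrence of C, so E(t_1, ..., t_m) = C(t_1, ...,
   t_{m-1}); one more block gives C(t_1, ..., t_{k-1}) - C(t_2, ..., t_{k-1}) - [t_2 = 1]. *)

Lemma take_size_belast (T : Type) (x : T) s : take (size s) (x :: s) = belast x s.
Proof. by elim: s x => //= y s IH x; rewrite IH. Qed.

Lemma all_belast (T : Type) (a : pred T) x s : all a (x :: s) -> all a (belast x s).
Proof. by elim: s x => //= y s IH x /andP[-> /IH]. Qed.

Lemma count_sum T (a : pred T) s : count a s = \sum_(x <- s) a x.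
Proof. by rewrite -sumn_count sumnE big_map. Qed.

Lemma rhoinv_cons r s : rhoinv (r :: s) = nseq r.-1 false ++ true :: rhoinv s.
Proof. by rewrite /rhoinv /= -cats1 -catA. Qed.

Lemma rho_aux_nseq c j w : rho_aux c (nseq j false ++ w) = rho_aux (c + j) w.
Proof. by elim: j c => [|j IH] c /=; rewrite ?addn0 // IH addnS. Qed.

Lemma rho_rhoinv s : all (fun i => 0 < i) s -> rho (rhoinv s) = s.
Proof.
elim: s => [|r s IH] //= /andP[r_gt0 /IH]; rewrite /rho in IH *.
by rewrite rhoinv_cons rho_aux_nseq add0n /= prednK // => ->.
Qed.

Lemma rhoinv_rho_aux c w : last (c == 0) w -> rhoinv (rho_aux c w) = nseq c false ++ w.
Proof.
elim: w c => [|[] w IH] c /=; first by case: c.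
  by move=> /(IH 0); rewrite rhoinv_cons /= => ->.
by move=> /(IH c.+1) ->; rewrite -addn1 nseqD -catA.
Qed.

Lemma rhoinv_rho w : last true w -> rhoinv (rho w) = w.
Proof. exact: (@rhoinv_rho_aux 0). Qed.

Lemma size_rho_aux c w : size (rho_aux c w) = count id w.
Proof. by elim: w c => [|[] w IH] c //=; rewrite IH. Qed.

Lemma sumn_rho_aux c w : last (c == 0) w -> sumn (rho_aux c w) = c + size w.
Proof.
elim: w c => [|[] w IH] c /=; first by case: c.
  by move=> /(IH 0) ->; rewrite add0n addSn addnS.
by move=> /(IH c.+1) ->; rewrite addnS.
Qed.

Lemma all_rho_aux c w : all (fun i => 0 < i) (rho_aux c w).
Proof. by elim: w c => [|[] w IH] c //=. Qed.

Lemma head_rho_aux c w : last false w -> c < nth 0 (rho_aux c w) 0.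
Proof. by elim: w c => [|[] w IH] c //= /IH /ltnW. Qed.

Lemma count_rhoinv s : count id (rhoinv s) = size s.
Proof. by elim: s => [|r s IH] //=; rewrite rhoinv_cons count_cat count_nseq /= IH. Qed.

Lemma size_rhoinv s : all (fun i => 0 < i) s -> size (rhoinv s) = sumn s.
Proof.
elim: s => [|r s IH] //= /andP[r_gt0 /IH]; rewrite rhoinv_cons size_cat size_nseq /=.
by move=> ->; lia.
Qed.

Lemma last_rhoinv b s : last b (rhoinv s) = (s != [::]) || b.
Proof.
elim: s b => [|r s IH] b //=; rewrite rhoinv_cons last_cat /= IH.
by case: s {IH}.
Qed.

Lemma mem_comps k n t :
  (t \in comps k n) = [&& size t == k, all (fun i => 0 < i) t & sumn t == n].
Proof.
elim: k n t => [|k IH] n t /=.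
  by case: t => [|a t]; case: n.
apply/flatten_mapP/idP => [[i] | ].
  rewrite mem_iota => /andP[i_gt0 i_le] /mapP[c]; rewrite IH.
  move=> /and3P[/eqP c_size c_pos /eqP c_sum] ->.
  by rewrite /= c_size c_pos eqxx i_gt0; apply/eqP; lia.
case: t => [|a t] //= /and3P[/eqP[t_size] /andP[a_gt0 t_pos] /eqP t_sum].
exists a; first by rewrite mem_iota; lia.
by apply/mapP; exists t; rewrite // IH t_size t_pos eqxx; apply/eqP; lia.
Qed.

Lemma uniq_comps k n : uniq (comps k n).
Proof.
elim: k n => [|k IH] n /=; first by case: (n == 0).
elim: (iota 1 n) (iota_uniq 1 n) => [|i s IHs] //= /andP[i_notin s_uniq].
rewrite cat_uniq IHs // andbT map_inj_uniq ?IH; last by move=> x y [].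
apply/hasPn => _ /flatten_mapP[j j_in /mapP[c _ ->]].
by apply/mapP => -[d _ [ij]]; move: i_notin; rewrite -ij j_in.
Qed.

Lemma shuffle_nil_r u : shuffle u [::] = [:: u].
Proof. by case: u. Qed.

Lemma perm_shuffle u v x : x \in shuffle u v -> perm_eq x (u ++ v).
Proof.
elim: u v x => [|a u IHu] v x; first by rewrite inE => /eqP->.
elim: v x => [|b v IHv] x; first by rewrite shuffle_nil_r inE cats0 => /eqP->.
rewrite /= mem_cat => /orP[] /mapP[y y_in ->]; first by rewrite perm_cons IHu.
rewrite perm_sym; have /= -> := perm_catCA (a :: u) [:: b] v.
by rewrite perm_cons perm_sym IHv.
Qed.

Lemma last_shuffle b u v x : x \in shuffle u v -> last b u -> last b v -> last b x.
Proof.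
elim: u b v x => [|a u IHu] b v x; first by rewrite inE => /eqP->.
elim: v b x => [|c v IHv] b x; first by rewrite shuffle_nil_r inE => /eqP->.
rewrite /= mem_cat => /orP[] /mapP[y y_in ->] /=.
  exact: (IHu a _ _ y_in).
exact: (IHv c _ y_in).
Qed.

Lemma count_shuffle_cons c w u v :
  count_mem (c :: w) (shuffle u v) =
  (if u is a :: u' then (a == c) * count_mem w (shuffle u' v) else 0) +
  (if v is b :: v' then (b == c) * count_mem w (shuffle u v') else 0).
Proof.
have count_cons a L : count_mem (c :: w) (map (cons a) L) = (a == c) * count_mem w L.
  rewrite count_map; case: eqVneq => [->|ne]; rewrite ?mul1n ?mul0n.
    by apply: eq_count => x /=; rewrite eqseq_cons eqxx.
  by rewrite (@eq_count _ _ pred0) ?count_pred0 // => x /=; rewrite eqseq_cons (negbTE ne).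
case: u => [|a u]; case: v => [|b v] //=; rewrite ?shuffle_nil_r /= ?addn0 ?eqseq_cons.
- by case: (b == c); rewrite ?mul1n.
- by case: (a == c); rewrite ?mul1n.
- by rewrite count_cat !count_cons.
Qed.

Fixpoint bitseqs n : seq bitseq :=
  if n is n'.+1 then map (cons true) (bitseqs n') ++ map (cons false) (bitseqs n')
  else [:: [::]].

Lemma size_bitseqs n m : m \in bitseqs n -> size m = n.
Proof.
elim: n m => [|n IH] m /=; first by rewrite inE => /eqP->.
by rewrite mem_cat => /orP[] /mapP[m' /IH <- ->].
Qed.

Lemma perm_mask_cat (T : eqType) (m : bitseq) (x : seq T) : size m = size x ->
  perm_eq (mask m x ++ mask (map negb m) x) x.
Proof.
elim: x m => [|c x IH] [|[] m] //= [/IH m_perm]; first by rewrite perm_cons.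
by have /= -> := perm_catCA (mask m x) [:: c] (mask (map negb m) x); rewrite perm_cons.
Qed.

Section Splits.
Variable T : Type.
Implicit Types (P Q : pred (seq T)) (w : seq T).

Definition splits P Q w : nat :=
  count (fun m => P (mask m w) && Q (mask (map negb m) w)) (bitseqs (size w)).

Lemma splits_nil P Q : splits P Q [::] = P [::] && Q [::].
Proof. by rewrite /splits /= addn0. Qed.

Lemma splits_cons P Q c w :
  splits P Q (c :: w) = splits (fun x => P (c :: x)) Q w + splits P (fun x => Q (c :: x)) w.
Proof. by rewrite /splits /= count_cat !count_map. Qed.

Lemma eq_splits P P' Q Q' w : P =1 P' -> Q =1 Q' -> splits P Q w = splits P' Q' w.
Proof. by move=> eP eQ; apply: eq_count => m /=; rewrite eP eQ. Qed.

Lemma splits_pred0l Q w : splits pred0 Q w = 0.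
Proof. by rewrite /splits; elim: (bitseqs _). Qed.

Lemma splits_pred0r P w : splits P pred0 w = 0.
Proof. by rewrite /splits; elim: (bitseqs _) => //= m s ->; rewrite andbF. Qed.

Lemma splits_condl (b : bool) P Q w : splits (fun x => b && P x) Q w = b * splits P Q w.
Proof. by case: b; rewrite ?mul1n ?mul0n; [apply: eq_splits | exact: splits_pred0l]. Qed.

Lemma splits_condr (b : bool) P Q w : splits P (fun x => b && Q x) w = b * splits P Q w.
Proof. by case: b; rewrite ?mul1n ?mul0n; [apply: eq_splits | exact: splits_pred0r]. Qed.

Lemma splits_nilp Q w : splits (@nilp T) Q w = Q w.
Proof.
elim: w Q => [|c w IH] Q; first by rewrite splits_nil.
by rewrite splits_cons IH (@eq_splits _ pred0 Q Q) ?splits_pred0l.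
Qed.

End Splits.

Lemma count_shuffle_splits w u v : count_mem w (shuffle u v) = splits (pred1 u) (pred1 v) w.
Proof.
elim: w u v => [|c w IH] u v.
  rewrite splits_nil; case: u => [|a u]; case: v => [|b v] //.
  by rewrite [shuffle _ _]/= count_cat !count_map !(@eq_count _ _ pred0) ?count_pred0.
rewrite count_shuffle_cons splits_cons; congr (_ + _).
  case: u => [|a u]; first by rewrite (@eq_splits _ _ pred0 _ (pred1 v)) ?splits_pred0l.
  rewrite IH -splits_condl; apply: eq_splits => // x /=.
  by rewrite eqseq_cons eq_sym.
case: v => [|b v]; first by rewrite (@eq_splits _ _ (pred1 u) _ pred0) ?splits_pred0r.
rewrite IH -splits_condr; apply: eq_splits => // x /=.
by rewrite eqseq_cons eq_sym.
Qed.

Definition letter_word (x : seq bool) : bool := x == rhoinv [:: size x].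

(* The encodings [rhoinv s] of indices with s_1 >= 2: they start with x0 and end with x1. *)
Definition admissible_word (x : seq bool) : bool :=
  if x is false :: x' then last false x' else false.

Lemma letter_word_false x : letter_word (false :: x) = letter_word x.
Proof. by case: x => [|c x]; rewrite /letter_word //= /rhoinv /= -cat_cons. Qed.

Lemma letter_word_true x : letter_word (true :: x) = nilp x.
Proof. by case: x => [|c x]; rewrite /letter_word //= /rhoinv /= eqseq_cons andbF. Qed.

Lemma admissible_rhoinv r t : 0 < r -> admissible_word (rhoinv (r :: t)) = (1 < r).
Proof.
by rewrite rhoinv_cons; case: r => [|[|r]] //= _; rewrite last_cat /= last_rhoinv orbT.
Qed.

Lemma splits_letter_true Q w :
  splits letter_word Q (true :: w) = Q w + splits letter_word (fun x => Q (true :: x)) w.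
Proof. by rewrite splits_cons (eq_splits _ letter_word_true (frefl Q)) splits_nilp. Qed.

Lemma splits_letter_false Q w : (forall x, Q (false :: x) = last false x) ->
  splits letter_word Q (false :: w) = splits letter_word Q w + splits letter_word (last false) w.
Proof.
move=> Q0; rewrite splits_cons (eq_splits _ letter_word_false (frefl Q)).
by rewrite (eq_splits _ (frefl letter_word) Q0).
Qed.

Lemma splits_letter_zeros Q j w : (forall x, Q (false :: x) = last false x) ->
  splits letter_word Q (nseq j false ++ w) + splits letter_word (last false) w =
  splits letter_word Q w + 2 ^ j * splits letter_word (last false) w.
Proof.
have last_zeros i : splits letter_word (last false) (nseq i false ++ w) =
                    2 ^ i * splits letter_word (last false) w.
  by elim: i => [|i IH]; rewrite ?mul1n //= splits_letter_false // IH expnS -mulnA mul2n addnn.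
move=> Q0; elim: j => [|j IH]; first by rewrite mul1n.
by rewrite /= splits_letter_false // last_zeros expnS; lia.
Qed.

Lemma CfE t :
  Cf t = Posz (\sum_(1 <= j < (size t).+1) 2 ^ (sumn (take j t) - j) + 2 ^ (sumn t - size t)).
Proof. by case: t => //; rewrite big_geq. Qed.

Lemma leq_sumn_take s j : all (fun i => 0 < i) s -> j <= size s -> j <= sumn (take j s).
Proof. by elim: s j => [|a s IH] [|j] //= /andP[a_gt0 /IH] /[apply]; lia. Qed.

Lemma Cf_cons r s : 0 < r -> all (fun i => 0 < i) s ->
  Cf (r :: s) = (Posz (2 ^ r.-1) * (1 + Cf s))%R.
Proof.
move=> r_gt0 s_pos; rewrite !CfE -PoszD -PoszM; congr Posz.
rewrite [size _]/= big_ltn // big_add1 /= take0 addn0 !mulnDr muln1 big_distrr addnA.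
congr (_ + _ + _); first by congr (_ ^ _); lia.
  apply: eq_big_nat => i /andP[i_gt0 i_le] /=; rewrite -expnD; congr (_ ^ _).
  by have := leq_sumn_take s_pos i_le; lia.
by rewrite -expnD; congr (_ ^ _); have := leq_sumn_take s_pos (leqnn _); rewrite take_size; lia.
Qed.

Lemma splits_letter_last_cons r t :
  let E := splits letter_word (last true) (rhoinv t) in
  splits letter_word (last true) (rhoinv (r :: t)) + ((t != [::]) + E) =
  1 + E + 2 ^ r.-1 * ((t != [::]) + E).
Proof.
have := splits_letter_zeros r.-1 (true :: rhoinv t) (Q := last true) (fun x => erefl).
by rewrite -rhoinv_cons !splits_letter_true !last_rhoinv orbF orbT.
Qed.

Lemma splits_letter_last r t : 0 < r -> all (fun i => 0 < i) t ->
  Posz (splits letter_word (last true) (rhoinv (r :: t))) = Cf (belast r t).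
Proof.
elim: t r => [|r' t IH] r r_gt0 t_pos.
  by have := splits_letter_last_cons r [::]; rewrite splits_nil /=; lia.
have belast_pos := all_belast t_pos.
case/andP: t_pos => r'_gt0 t_pos; rewrite [belast _ _]/= Cf_cons // -IH //.
by have /= := splits_letter_last_cons r (r' :: t); lia.
Qed.

Lemma splits_letter_admissible r r' t : 0 < r -> 0 < r' -> all (fun i => 0 < i) t ->
  Posz (splits letter_word admissible_word (rhoinv [:: r, r' & t])) =
  (Cf (belast r (r' :: t)) - Cf (belast r' t) - (if r' == 1 then 1 else 0))%R.
Proof.
move=> r_gt0 r'_gt0 t_pos.
have := splits_letter_zeros r.-1 (true :: rhoinv (r' :: t)) (Q := admissible_word) (fun x => erefl).
rewrite -rhoinv_cons !splits_letter_true admissible_rhoinv // last_rhoinv splits_pred0r.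
have belast_pos : all (fun i => 0 < i) (belast r' t) by apply: all_belast; rewrite /= r'_gt0.
rewrite [belast _ _]/= Cf_cons // -splits_letter_last // orbF [r' :: t != [::]]/=.
(* [set] identifies [last true] with the convertible [fun x => last false (true :: x)]. *)
set e := splits _ (last true) _.
have -> : (1 < r') = (r' != 1) by case: (r') r'_gt0 => [|[]].
by case: (r' == 1) => /=; lia.
Qed.

Lemma rhoinv_cat s1 s2 : rhoinv (s1 ++ s2) = rhoinv s1 ++ rhoinv s2.
Proof. by rewrite /rhoinv map_cat flatten_cat. Qed.

Lemma rho_perm_comps k n t x :
  t \in comps k n -> last true x -> perm_eq x (rhoinv t) -> rho x \in comps k n.
Proof.
rewrite !mem_comps => /and3P[/eqP <- t_pos /eqP <-] x_last x_perm.
rewrite /rho size_rho_aux sumn_rho_aux // all_rho_aux (permP x_perm) (perm_size x_perm).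
by rewrite count_rhoinv size_rhoinv // !eqxx.
Qed.

Lemma count_rho_shuffle u v w : last true u -> last true v -> all (fun i => 0 < i) w ->
  count (fun x => rho x == w) (shuffle u v) = count_mem (rhoinv w) (shuffle u v).
Proof.
move=> u_last v_last w_pos; apply: eq_in_count => x x_in /=.
have x_last := last_shuffle x_in u_last v_last.
by apply/eqP/eqP => [<- | ->]; [rewrite rhoinv_rho | rewrite rho_rhoinv].
Qed.

Lemma letter_wordP U : letter_word U -> count id U = 1 /\ 0 < size U.
Proof. by move=> /eqP ->; rewrite count_rhoinv rhoinv_cons size_cat addnS. Qed.

Lemma admissible_wordE V : admissible_word V = last true V && (1 < nth 0 (rho V) 0).
Proof.
case: V => [|[] V] /=; rewrite ?andbF //.
by case V_last: (last false V) => //; rewrite (head_rho_aux 1 V_last).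
Qed.

Lemma eq_rhoinv_cons U V a s : 0 < a -> all (fun i => 0 < i) s ->
  (U == rhoinv [:: a]) && (V == rhoinv s) =
  (a :: s == size U :: rho V) && (letter_word U && last true V).
Proof.
move=> a_gt0 s_pos; rewrite eqseq_cons.
apply/andP/andP => [[/eqP-> /eqP->] | [/andP[/eqP-> /eqP->] /andP[U_letter V_last]]].
  rewrite size_rhoinv /= ?a_gt0 // addn0 rho_rhoinv // !eqxx last_rhoinv orbT andbT.
  by split; rewrite // /letter_word size_rhoinv /= ?a_gt0 ?addn0 ?eqxx.
by split; rewrite ?rhoinv_rho.
Qed.

Lemma mem_admissible_comps k n U V : letter_word U -> last true V ->
  count id U + count id V = k -> size U + size V = n ->
  (size U :: rho V \in [seq t <- comps k n | 1 < nth 0 t 1]) = admissible_word V.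
Proof.
move=> /letter_wordP[U_count U_size] V_last <- <-.
rewrite mem_filter mem_comps admissible_wordE V_last /= U_size U_count.
by rewrite /rho size_rho_aux sumn_rho_aux // all_rho_aux !eqxx !andbT.
Qed.

Lemma count_split_admissible k n U V :
  count id U + count id V = k -> size U + size V = n ->
  count (fun s => (U == rhoinv [:: head 0 s]) && (V == rhoinv (behead s)))
        [seq t <- comps k n | 1 < nth 0 t 1] = letter_word U && admissible_word V.
Proof.
move=> UV_count UV_size.
have split_eq : {in [seq t <- comps k n | 1 < nth 0 t 1], forall s,
    (U == rhoinv [:: head 0 s]) && (V == rhoinv (behead s)) =
    (s == size U :: rho V) && (letter_word U && last true V)}.
  move=> [|a s]; rewrite mem_filter // mem_comps => /andP[_ /and3P[_ /andP[a_gt0 s_pos] _]].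
  exact: eq_rhoinv_cons.
rewrite (eq_in_count split_eq).
case: (boolP (letter_word U && last true V)) => [/andP[U_letter V_last] | not_UV].
  rewrite (@eq_count _ _ (pred1 (size U :: rho V))) => [|s]; last by rewrite andbT.
  by rewrite count_uniq_mem ?filter_uniq ?uniq_comps // mem_admissible_comps // U_letter.
rewrite admissible_wordE andbA (negbTE not_UV).
by rewrite (@eq_count _ _ pred0) ?count_pred0 // => s; rewrite andbF.
Qed.

Lemma sum_count_shuffle k n w :
  \sum_(s <- [seq t <- comps k n | 1 < nth 0 t 1])
     count (fun x => rho x == w) (shuffle (rhoinv [:: head 0 s]) (rhoinv (behead s))) =
  if w \in comps k n then splits letter_word admissible_word (rhoinv w) else 0.
Proof.
case: ifP => [w_in | w_notin]; last first.
  rewrite big1_seq // => -[|a s] /andP[_]; rewrite mem_filter // => /andP[_ s_in].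
  rewrite (@eq_in_count _ _ pred0) ?count_pred0 // => x x_in /=.
  apply: contraFF w_notin => /eqP <-; apply: rho_perm_comps s_in _ _.
    by apply: last_shuffle x_in _ _; rewrite last_rhoinv orbT.
  by rewrite -[a :: s]/([:: a] ++ s) rhoinv_cat; apply: perm_shuffle.
move: w_in; rewrite mem_comps => /and3P[/eqP w_size w_pos /eqP w_sum].
under eq_bigr do rewrite count_rho_shuffle ?last_rhoinv ?orbT // count_shuffle_splits /splits count_sum.
rewrite exchange_big /splits count_sum /=; apply: eq_big_seq => m /size_bitseqs m_size.
have W_perm := perm_mask_cat m_size.
rewrite -count_sum count_split_admissible //.
  by rewrite -count_cat (permP W_perm) count_rhoinv.
by rewrite -size_cat (perm_size W_perm) size_rhoinv.
Qed.

Local Open Scope ring_scope.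

Lemma sum_eq_uniq (T : eqType) (R : nmodType) (L : seq T) (F : T -> R) w : uniq L ->
  \sum_(t <- L) (if t == w then F t else 0) = if w \in L then F w else 0.
Proof.
move=> L_uniq; rewrite -big_mkcond; case: ifP => [w_in | w_notin].
  rewrite (big_rem w) //= eqxx big1_seq ?addr0 // => t /andP[/eqP-> ].
  by rewrite mem_rem_uniqF.
by rewrite big1_seq // => t /andP[/eqP-> ]; rewrite w_notin.
Qed.

Lemma hcoef_hadd x y w : hcoef (hadd x y) w = hcoef x w + hcoef y w.
Proof. exact: big_cat. Qed.

Lemma hcoef_hbig A (I : seq A) f w : hcoef (hbig I f) w = \sum_(i <- I) hcoef (f i) w.
Proof.
elim: I => [|i I IH]; first by rewrite /hcoef !big_nil.
by rewrite big_cons -IH -hcoef_hadd.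
Qed.

Lemma hcoef_hscale c x w : hcoef (hscale c x) w = c * hcoef x w.
Proof.
rewrite /hcoef big_map mulr_sumr; apply: eq_bigr => p _ /=.
by case: (_ == w); rewrite ?mulr0.
Qed.

Lemma hcoef_hopp x w : hcoef (hopp x) w = - hcoef x w.
Proof. by rewrite hcoef_hscale mulN1r. Qed.

Lemma hcoef_zw t w : hcoef (zw t) w = if t == w then 1 else 0.
Proof. by rewrite /hcoef big_seq1. Qed.

Lemma hcoef_hscale_zw c t w : hcoef (hscale c (zw t)) w = if t == w then c else 0.
Proof. by rewrite hcoef_hscale hcoef_zw; case: (t == w); rewrite ?mulr1 ?mulr0. Qed.

Lemma hcoef_hsh a b w : hcoef (hsh (zw a) (zw b)) w =
  Posz (count (fun x => rho x == w) (shuffle (rhoinv a) (rhoinv b))).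
Proof.
rewrite /hsh /= cats0 /hcoef big_map.
by elim: (shuffle _ _) => [|x L IH]; rewrite ?big_nil // big_cons IH /=; case: (rho x == w).
Qed.

Theorem theorem2p6 (k n : nat) (hk : (2 <= k)%N) (hn : (k.+1 <= n)%N) :
  heq
    (hbig [seq t <- comps k n | (2 <= nth 0 t 1)%N]
          (fun t => hsh (zw [:: head 0%N t]) (zw (behead t))))
    (hadd
      (hbig (comps k n)
         (fun t => hscale (Cf (take k.-1 t) - Cf (take (k - 2) (behead t))) (zw t)))
      (hopp (hbig [seq t <- comps k n | nth 0 t 1 == 1%N] zw))).
Proof.
move=> w; rewrite hcoef_hadd hcoef_hopp !hcoef_hbig.
under eq_bigr do rewrite hcoef_hsh.
under [in RHS]eq_bigr do rewrite hcoef_hscale_zw.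
under [X in _ - X]eq_bigr do rewrite hcoef_zw.
rewrite -(big_morph Posz PoszD (erefl 0%:Z)) sum_count_shuffle !sum_eq_uniq ?filter_uniq ?uniq_comps //.
rewrite mem_filter; case: ifP => [w_in | _]; last by rewrite andbF subr0.
move: w_in; rewrite andbT mem_comps => /and3P[/eqP w_size w_pos _]; subst k.
case: w hk hn w_pos => [|r [|r' t]] // _ _ /and3P[r_gt0 r'_gt0 t_pos].
have -> : take (size [:: r, r' & t]).-1 [:: r, r' & t] = belast r (r' :: t).
  exact: (take_size_belast r (r' :: t)).
have -> : (size [:: r, r' & t] - 2)%N = size t by rewrite /= subn2.
rewrite [behead _]/= take_size_belast.
exact: splits_letter_admissible.
Qed.
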